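(* Let $A,B$ be nonzero finite-dimensional $K$-subspaces of $L$. Then there exist a $K$-subspace $S$ of $\langle AB\rangle$ and a (possibly skew) subfield $H$ of $L$ with $K\subset H\subset L$ and $\dim_KH$ finite, such that $$\dim_KS\geq\dim_KA+\dim_KB-\dim_KH,$$ and either $HS=S$ or $SH=S$.
   Context: $K$ is a commutative field and $L$ is a (possibly noncommutative) division ring containing $K$ in its center. For $S\subset L$, $\langle S\rangle$ denotes the $K$-subspace of $L$ spanned by $S$. For subsets $S_1,S_2$ of $L$, $S_1S_2=\{s_1s_2\mid s_1\in S_1,s_2\in S_2\}$ (product set). *)

From HB Require Import structures.
From mathcomp Require Import all_boot all_order all_algebra.
Set Implicit Arguments. Unset Strict Implicit. Unset Printing Implicit Defensive.
Import GRing.Theory.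
Local Open Scope ring_scope.

Section LinDefs.
Variables (K : fieldType) (V : lmodType K).

Definition subspace (A : V -> Prop) : Prop :=
  A 0 /\ forall (a : K) (u v : V), A u -> A v -> A (a *: u + v).

Definition lin_indep (s : seq V) : Prop :=
  forall c : 'I_(size s) -> K,
    \sum_(i < size s) c i *: s`_i = 0 -> forall i, c i = 0.

Definition span_seq (s : seq V) : V -> Prop :=
  fun v => exists c : 'I_(size s) -> K, v = \sum_(i < size s) c i *: s`_i.

Definition spanK (X : V -> Prop) : V -> Prop :=
  fun v => exists s : seq V, (forall x, x \in s -> X x) /\ span_seq s v.

Definition has_dim (A : V -> Prop) (d : nat) : Prop :=
  exists s : seq V, [/\ lin_indep s, size s = d & forall v, A v <-> span_seq s v].

End LinDefs.

Section RingDefs.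
Variables (K : fieldType) (L : algType K).

Definition prodset (S1 S2 : L -> Prop) : L -> Prop :=
  fun x => exists s1 s2, [/\ S1 s1, S2 s2 & x = s1 * s2].

Definition skew_subfield_over_K (H : L -> Prop) : Prop :=
  [/\ forall k : K, H (k%:A),
      forall x y, H x -> H y -> H (x - y),
      forall x y, H x -> H y -> H (x * y)
    & forall x, H x -> x != 0 -> exists y, [/\ H y, x * y = 1 & y * x = 1]].

End RingDefs.

From HB Require Import structures.
From mathcomp Require Import all_boot all_order all_algebra zify.
From Stdlib Require Import Classical.
Import GRing.Theory.
Local Open Scope ring_scope.

(* Proof (Kemperman-style e-transforms).  Fix the finite-dimensional space
   C = <AB>.  For y != 0 with A ∩ Ay != 0 and B ∩ yB != 0, the e-transforms
   (A + Ay, y^-1 (B ∩ yB)) and ((A ∩ Ay) y^-1, B + yB) still have their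
   products in <AB>; by the Grassmann inequality one of them raises
   dim A + dim B, or keeps it and lowers dim B, unless Ay ⊆ A and yB ⊆ B.
   This is a lexicographic induction on (2 dim C - dim A - dim B, dim B).
   When no y moves the pair ("rigid" pair), pick b0 != 0 in B: either
   B b0^-1 stabilises A on the right, and S = A b0 with H its right
   stabiliser works, or some b1 gives A b0 ∩ A b1 = 0, and S = A b0 + A b1
   with H = K works when dim B <= dim A.  The case dim A < dim B, like the
   second e-transform, is the mirror image, obtained by running the same
   argument in the opposite ring L^c. *)

Set Implicit Arguments. Unset Strict Implicit. Unset Printing Implicit Defensive.

Section LinearAlgebra.
Variables (K : fieldType) (V : lmodType K).
Implicit Types (s t : seq V) (P Q : V -> Prop) (u v w x : V).

Lemma subspace0 P : subspace P -> P 0.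
Proof. by case. Qed.

Lemma subspaceD P u v : subspace P -> P u -> P v -> P (u + v).
Proof. by case=> _ hP Pu Pv; have := hP 1 u v Pu Pv; rewrite scale1r. Qed.

Lemma subspaceZ P a u : subspace P -> P u -> P (a *: u).
Proof. by case=> P0 hP Pu; have := hP a u 0 Pu P0; rewrite addr0. Qed.

Lemma subspaceB P u v : subspace P -> P u -> P v -> P (u - v).
Proof. by case=> _ hP Pu Pv; have := hP (-1) v u Pv Pu; rewrite scaleN1r addrC. Qed.

Definition cons_coef n (a : K) (c : 'I_n -> K) : 'I_n.+1 -> K :=
  fun j => if unlift ord0 j is Some k then c k else a.

Lemma cons_coef0 n a (c : 'I_n -> K) : cons_coef a c ord0 = a.
Proof. by rewrite /cons_coef unlift_none. Qed.

Lemma cons_coefS n a (c : 'I_n -> K) i : cons_coef a c (lift ord0 i) = c i.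
Proof. by rewrite /cons_coef liftK. Qed.

Lemma sum_cons x s (c : 'I_(size s).+1 -> K) :
  \sum_(i < size (x :: s)) c i *: (x :: s)`_i
  = c ord0 *: x + \sum_(i < size s) c (lift ord0 i) *: s`_i.
Proof. by rewrite big_ord_recl; congr (_ + _); apply: eq_bigr => i _; rewrite lift0. Qed.

Lemma sum_cons_coef x s a (c : 'I_(size s) -> K) :
  \sum_(i < size (x :: s)) cons_coef a c i *: (x :: s)`_i
  = a *: x + \sum_(i < size s) c i *: s`_i.
Proof.
rewrite sum_cons cons_coef0; congr (_ + _).
by apply: eq_bigr => i _; rewrite cons_coefS.
Qed.

Lemma span_seq_nil v : span_seq [::] v <-> v = 0.
Proof.
split=> [[c ->]|->]; first by rewrite big_ord0.
by exists (fun _ => 0); rewrite big_ord0.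
Qed.

Lemma span_seq_cons x s v :
  span_seq (x :: s) v <-> exists a w, span_seq s w /\ v = a *: x + w.
Proof.
split=> [[c ->]|[a [w [[c ->] ->]]]].
  rewrite sum_cons; exists (c ord0), (\sum_(i < size s) c (lift ord0 i) *: s`_i).
  by split=> //; exists (fun i => c (lift ord0 i)).
by exists (cons_coef a c); rewrite sum_cons_coef.
Qed.

Lemma span_seq_subspace s : subspace (span_seq s).
Proof.
split; first by exists (fun _ => 0); rewrite big1 // => i _; rewrite scale0r.
move=> a u v [c ->] [d ->]; exists (fun i => a * c i + d i).
rewrite scaler_sumr -big_split /=; apply: eq_bigr => i _.
by rewrite scalerDl scalerA.
Qed.

Lemma span_seq_min s P : subspace P -> (forall x, x \in s -> P x) ->
  forall v, span_seq s v -> P v.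
Proof.
move=> hP; elim: s => [|x s IH] hs v.
  by move/span_seq_nil=> ->; apply: subspace0.
case/span_seq_cons=> a [w [hw ->]]; apply: subspaceD => //.
  by apply: subspaceZ => //; apply: hs; rewrite inE eqxx.
by apply: IH hw => y hy; apply: hs; rewrite inE hy orbT.
Qed.

Lemma span_seq_mem s x : x \in s -> span_seq s x.
Proof.
elim: s => [|y s IH] //; rewrite inE => /orP[/eqP ->|hx]; apply/span_seq_cons.
  by exists 1, 0; split; [exact: subspace0 (span_seq_subspace s) | rewrite scale1r addr0].
by exists 0, x; split; [apply: IH | rewrite scale0r add0r].
Qed.

Lemma span_seq_cat s t u v :
  span_seq s u -> span_seq t v -> span_seq (s ++ t) (u + v).
Proof.
have hst := span_seq_subspace (s ++ t).
move=> hu hv; apply: subspaceD => //.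
- by apply: (span_seq_min hst) hu => x hx; apply: span_seq_mem; rewrite mem_cat hx.
- by apply: (span_seq_min hst) hv => x hx; apply: span_seq_mem; rewrite mem_cat hx orbT.
Qed.

Lemma lin_indep_nil : lin_indep ([::] : seq V).
Proof. by move=> c _ []. Qed.

Lemma lin_indep_cons x s : lin_indep (x :: s) <-> lin_indep s /\ ~ span_seq s x.
Proof.
split=> [hxs|[hs hx] c].
  split=> [c hc i|[c ex]].
    have := hxs (cons_coef 0 c) _ (lift ord0 i).
    by rewrite sum_cons_coef scale0r add0r cons_coefS; apply.
  have := hxs (cons_coef 1 (fun i => - c i)).
  rewrite sum_cons_coef scale1r; under eq_bigr => i _ do rewrite scaleNr.
  rewrite sumrN -ex subrr => /(_ erefl ord0); rewrite cons_coef0 => /eqP.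
  by rewrite oner_eq0.
rewrite sum_cons => hc.
set w := \sum_(i < size s) _ in hc.
have c0 : c ord0 = 0.
  apply/eqP/negP => /negP nz; apply: hx.
  have -> : x = - (c ord0)^-1 *: w.
    rewrite scaleNr -scalerN; apply: (canRL (scalerK nz)).
    by apply/eqP; rewrite -addr_eq0 hc.
  by apply: subspaceZ (span_seq_subspace s) _; exists (fun i => c (lift ord0 i)).
move: hc; rewrite c0 scale0r add0r => /hs hc0 i.
by case: (unliftP ord0 i) => [j ->|->].
Qed.

(* Coordinates: comb s r is the combination of s with coefficient row r.  It
   turns statements about families of vectors of V spanned by s into
   statements about MathComp's finite-dimensional space 'rV_(size s). *)
Definition comb s (r : 'rV[K]_(size s)) : V := \sum_(i < size s) r 0 i *: s`_i.
Arguments comb : clear implicits.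

Lemma combD s a r1 r2 : comb s (a *: r1 + r2) = a *: comb s r1 + comb s r2.
Proof.
rewrite /comb scaler_sumr -big_split; apply: eq_bigr => i _.
by rewrite !mxE scalerDl scalerA.
Qed.

Lemma comb0 s : comb s 0 = 0.
Proof. by rewrite /comb big1 // => i _; rewrite mxE scale0r. Qed.

Lemma span_comb s v : span_seq s v <-> exists r, v = comb s r.
Proof.
split=> [[c ->]|[r ->]]; last by exists (fun i => r 0 i).
by exists (\row_i c i); apply: eq_bigr => i _; rewrite mxE.
Qed.

Lemma comb_vspan s (rs : seq 'rV[K]_(size s)) r :
  (r \in <<rs>>)%VS -> span_seq (map (comb s) rs) (comb s r).
Proof.
elim: rs r => [|r0 rs IH] r.
  by rewrite span_nil memv0 => /eqP ->; rewrite comb0; apply/span_seq_nil.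
rewrite span_cons => /memv_addP [u /vlineP [k ->] [w hw ->]].
by apply/span_seq_cons; exists k, (comb s w); split; [exact: IH | rewrite combD].
Qed.

Lemma lin_indep_free s (rs : seq 'rV[K]_(size s)) :
  lin_indep (map (comb s) rs) -> free rs.
Proof.
elim: rs => [|r rs IH] /=; first by move=> _; exact: nil_free.
move/lin_indep_cons=> [hrs hr]; rewrite free_cons IH // andbT.
by apply/negP => /comb_vspan.
Qed.

Lemma steinitz s t : lin_indep t -> (forall x, x \in t -> span_seq s x) ->
  (size t <= size s)%N.
Proof.
move=> ht hts.
have [rs et] : exists rs : seq 'rV[K]_(size s), t = map (comb s) rs.
  elim: t {ht} hts => [|x t IH] hts; first by exists [::].
  have [rs ->] := IH (fun y hy => hts y (mem_behead (s := x :: t) hy)).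
  have [r ->] := proj1 (span_comb s x) (hts x (mem_head _ _)).
  by exists (r :: rs).
rewrite et in ht *; rewrite size_map -(eqP (lin_indep_free ht)).
by apply: leq_trans (dimvS (subvf _)) _; rewrite dimvf dim_matrix mul1r.
Qed.

Lemma split_off_vector P x s p : subspace P ->
  (forall v, P v -> span_seq (x :: s) v) -> P p -> ~ span_seq s p ->
  forall v, P v -> exists a w, [/\ P w, span_seq s w & v = a *: p + w].
Proof.
move=> hP hPxs Pp nsp v Pv.
have [a [w [hw ev]]] := proj1 (span_seq_cons _ _ _) (hPxs v Pv).
have [b [w0 [hw0 ep]]] := proj1 (span_seq_cons _ _ _) (hPxs p Pp).
have bnz : b != 0.
  by apply/eqP => b0; apply: nsp; rewrite ep b0 scale0r add0r.
exists (a / b), (v - (a / b) *: p); split; last by rewrite addrC subrK.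
  by apply: subspaceB => //; apply: subspaceZ.
have -> : v - (a / b) *: p = w - (a / b) *: w0.
  by rewrite ev ep scalerDr scalerA divfK // opprD addrACA subrr add0r.
by apply: subspaceB (span_seq_subspace s) hw _; apply: subspaceZ (span_seq_subspace s) hw0.
Qed.

Lemma subspace_basis s P : subspace P -> (forall v, P v -> span_seq s v) ->
  exists t, [/\ lin_indep t, (size t <= size s)%N & forall v, P v <-> span_seq t v].
Proof.
elim: s P => [|x s IH] P hP hPs.
  exists [::]; split=> //; first exact: lin_indep_nil.
  by move=> v; split=> [/hPs //|/span_seq_nil ->]; exact: subspace0.
case: (classic (forall v, P v -> span_seq s v)) => [hPs'|].
  by have [t [ht hsz hPt]] := IH P hP hPs'; exists t; split=> //; apply: leqW.
move=> /not_all_ex_not [p hp].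
have [Pp nsp] := (not_imply_elim _ _ hp, not_imply_elim2 _ _ hp).
pose Ps := fun v => P v /\ span_seq s v.
have hPs' : subspace Ps.
  split; first by split; [apply: subspace0 | apply: subspace0 (span_seq_subspace s)].
  move=> a u v [Pu su] [Pv sv]; split; first by case: hP => _; apply.
  by case: (span_seq_subspace s) => _; apply.
have [t [ht hsz hPt]] := IH Ps hPs' (fun v h => h.2).
exists (p :: t); split=> //.
  by apply/lin_indep_cons; split=> // /hPt [].
move=> v; split=> [Pv|/span_seq_cons [a [w [/hPt [Pw _] ->]]]].
  have [a [w [Pw sw ->]]] := split_off_vector hP hPs Pp nsp Pv.
  by apply/span_seq_cons; exists a, w; split=> //; apply/hPt.
by apply: subspaceD => //; apply: subspaceZ.
Qed.

Lemma has_dim_subspace P d : has_dim P d -> subspace P.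
Proof.
case=> s [_ _ hPs]; split; first by apply/hPs; apply: subspace0 (span_seq_subspace s).
by move=> a u v /hPs hu /hPs hv; apply/hPs; case: (span_seq_subspace s) => _; apply.
Qed.

Lemma has_dim_ext P Q d : has_dim P d -> (forall v, P v <-> Q v) -> has_dim Q d.
Proof. by case=> s [hs hsz hPs] hPQ; exists s; split=> // v; rewrite -hPQ. Qed.

Lemma has_dim0 : has_dim (fun v => v = 0) 0.
Proof. by exists [::]; split=> //; [exact: lin_indep_nil | move=> v; rewrite span_seq_nil]. Qed.

Lemma has_dim_le_span P d s : has_dim P d -> (forall v, P v -> span_seq s v) ->
  (d <= size s)%N.
Proof.
case=> t [ht <- hPt] hPs; apply: steinitz => // x hx.
by apply/hPs/hPt/span_seq_mem.
Qed.

Lemma has_dim_le P Q dp dq : has_dim P dp -> has_dim Q dq ->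
  (forall v, P v -> Q v) -> (dp <= dq)%N.
Proof. by move=> hP [s [_ <- hQs]] hPQ; apply: (has_dim_le_span hP) => v /hPQ /hQs. Qed.

Lemma span_has_dim P s : subspace P -> (forall v, P v -> span_seq s v) ->
  exists d, has_dim P d.
Proof. by move=> hP /(subspace_basis hP) [t [ht _ hPt]]; exists (size t), t. Qed.

Lemma sub_has_dim P Q dq : subspace P -> has_dim Q dq ->
  (forall v, P v -> Q v) -> exists dp, has_dim P dp.
Proof. by move=> hP [s [_ _ hQs]] hPQ; apply: (span_has_dim (s := s) hP) => v /hPQ /hQs. Qed.

Lemma has_dim_lt P Q dp dq v : has_dim P dp -> has_dim Q dq ->
  (forall v, P v -> Q v) -> Q v -> ~ P v -> (dp < dq)%N.
Proof.
move=> [t [ht <- hPt]] [s [_ <- hQs]] hPQ Qv nPv.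
have hvt : lin_indep (v :: t) by apply/lin_indep_cons; split=> // /hPt.
apply: (steinitz hvt) => x; rewrite inE => /orP[/eqP ->|hx]; first exact/hQs.
by apply/hQs/hPQ/hPt/span_seq_mem.
Qed.

Lemma has_dim_eq_sub P Q d : has_dim P d -> has_dim Q d ->
  (forall v, P v -> Q v) -> forall v, Q v -> P v.
Proof.
move=> hP hQ hPQ v Qv; apply: NNPP => nPv.
by have := has_dim_lt hP hQ hPQ Qv nPv; rewrite ltnn.
Qed.

Lemma has_dim_nz P d : has_dim P d -> (0 < d)%N -> exists v, P v /\ v != 0.
Proof.
case=> [[|x s]] [hxs <- hPs] // _; exists x; split.
  by apply/hPs/span_seq_mem; rewrite inE eqxx.
apply/eqP => x0; case/lin_indep_cons: hxs => _; apply; rewrite x0.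
exact: subspace0 (span_seq_subspace s).
Qed.

Lemma has_dim_pos P d v : has_dim P d -> P v -> v != 0 -> (0 < d)%N.
Proof.
move=> hP Pv nzv; apply: (has_dim_lt has_dim0 hP _ Pv) => [w ->|/eqP] //.
  exact: subspace0 (has_dim_subspace hP).
by rewrite (negbTE nzv).
Qed.

Definition addsp P Q : V -> Prop := fun v => exists p q, [/\ P p, Q q & v = p + q].
Definition capsp P Q : V -> Prop := fun v => P v /\ Q v.

Lemma addsp_subspace P Q : subspace P -> subspace Q -> subspace (addsp P Q).
Proof.
move=> hP hQ; split; first by exists 0, 0; rewrite addr0; split=> //; apply: subspace0.
move=> a u v [p [q [Pp Qq ->]]] [p' [q' [Pp' Qq' ->]]].
exists (a *: p + p'), (a *: q + q'); rewrite scalerDr addrACA; split=> //.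
  by case: hP => _; apply.
by case: hQ => _; apply.
Qed.

Lemma capsp_subspace P Q : subspace P -> subspace Q -> subspace (capsp P Q).
Proof.
by move=> [P0 hP] [Q0 hQ]; split=> // a u v [? ?] [? ?]; split; [exact: hP | exact: hQ].
Qed.

Lemma addsp_l P Q : subspace Q -> forall v, P v -> addsp P Q v.
Proof. by move=> hQ v Pv; exists v, 0; rewrite addr0; split=> //; apply: subspace0. Qed.

Lemma addsp_r P Q : subspace P -> forall v, Q v -> addsp P Q v.
Proof. by move=> hP v Qv; exists 0, v; rewrite add0r; split=> //; apply: subspace0. Qed.

Lemma addsp_dim_eq P Q d : has_dim P d -> has_dim (addsp P Q) d -> subspace Q ->
  forall v, Q v -> P v.
Proof.
move=> hP hPQ hQ v Qv; apply: (has_dim_eq_sub hP hPQ (addsp_l hQ)).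
exact: addsp_r (has_dim_subspace hP) _ Qv.
Qed.

Lemma capsp_dim_eq P Q d : has_dim P d -> has_dim (capsp P Q) d ->
  forall v, P v -> Q v.
Proof. by move=> hP hPQ v Pv; case: (has_dim_eq_sub hPQ hP (fun w h => h.1) Pv). Qed.

Lemma grassmann_span P dp s : has_dim P dp -> lin_indep s ->
  exists ds dc, [/\ has_dim (addsp P (span_seq s)) ds,
    has_dim (capsp P (span_seq s)) dc & (dp + size s <= ds + dc)%N].
Proof.
move=> hP; have sP := has_dim_subspace hP; have [sb [_ _ hPb]] := hP.
elim: s => [_|x s IH].
  exists dp, 0%N; rewrite addn0; split=> //.
    apply: has_dim_ext hP _ => v; split; first exact/addsp_l/span_seq_subspace.
    by case=> p [q [Pp /span_seq_nil -> ->]]; rewrite addr0.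
  apply: has_dim_ext has_dim0 _ => v; split=> [->|[_ /span_seq_nil //]].
  by split; [exact: subspace0 | exact/span_seq_nil].
case/lin_indep_cons=> /IH [ds0 [dc0 [hS0 hC0 le0]]] nsx.
have sub_s w : span_seq s w -> span_seq (x :: s) w.
  by move=> hw; apply/span_seq_cons; exists 0, w; rewrite scale0r add0r.
have sxs := span_seq_subspace (x :: s).
have [ds hS] : exists ds, has_dim (addsp P (span_seq (x :: s))) ds.
  apply: (span_has_dim (s := sb ++ x :: s)) => [|v [p [q [Pp sq ->]]]].
    exact: addsp_subspace.
  by apply: span_seq_cat => //; apply/hPb.
have [dc hC] := sub_has_dim (capsp_subspace sP sxs) hP (fun v h => h.1).
exists ds, dc; split=> //=.
have leS : (ds0 <= ds)%N.
  by apply: has_dim_le hS0 hS _ => v [p [q [Pp sq ->]]]; exists p, q; split=> //; apply: sub_s.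
have leC : (dc0 <= dc)%N.
  by apply: has_dim_le hC0 hC _ => v [Pv sv]; split=> //; apply: sub_s.
have x_in : span_seq (x :: s) x by apply: span_seq_mem; rewrite inE eqxx.
case: (classic (addsp P (span_seq s) x)) => [[p [q [Pp sq ex]]]|nPsx].
  have : (dc0 < dc)%N; last by lia.
  apply: (has_dim_lt (v := p) hC0 hC) => [v [Pv sv]||[_ sp]].
  - by split=> //; apply: sub_s.
  - split=> //; have -> : p = x - q by rewrite ex addrK.
    by apply: subspaceB => //; apply: sub_s.
  - by apply: nsx; rewrite ex; apply: subspaceD (span_seq_subspace s) _ _.
have : (ds0 < ds)%N; last by lia.
apply: (has_dim_lt (v := x) hS0 hS) => // [v [p [q [Pp sq ->]]]|].
  by exists p, q; split=> //; apply: sub_s.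
exact: addsp_r.
Qed.

Lemma grassmann P Q dp dq : has_dim P dp -> has_dim Q dq -> exists ds dc,
  [/\ has_dim (addsp P Q) ds, has_dim (capsp P Q) dc & (dp + dq <= ds + dc)%N].
Proof.
move=> hP [s [hs <- hQs]]; have [ds [dc [hS hC le]]] := grassmann_span hP hs.
exists ds, dc; split=> //.
  by apply: has_dim_ext hS _ => v; split=> -[p [q [Pp /hQs Qq ->]]]; exists p, q.
by apply: has_dim_ext hC _ => v; split=> -[Pv /hQs Qv].
Qed.

Definition img (f : V -> V) P : V -> Prop := fun v => exists p, P p /\ v = f p.

Section LinearImage.
Variable f : V -> V.
Hypothesis f_lin : forall a u v, f (a *: u + v) = a *: f u + f v.
Hypothesis f_inj : injective f.

Lemma lin_f0 : f 0 = 0.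
Proof.
have := f_lin 1 0 0; rewrite !scale1r addr0 => f00.
by apply: (addrI (f 0)); rewrite addr0 -f00.
Qed.

Lemma img_subspace P : subspace P -> subspace (img f P).
Proof.
move=> hP; split; first by exists 0; split; [apply: subspace0 | rewrite lin_f0].
move=> a u v [p [Pp ->]] [q [Pq ->]]; exists (a *: p + q); rewrite f_lin; split=> //.
by case: hP => _; apply.
Qed.

Lemma span_seq_map t v : span_seq (map f t) v <-> img f (span_seq t) v.
Proof.
elim: t v => [|y t IH] v /=.
  rewrite span_seq_nil; split=> [->|[p [/span_seq_nil -> ->]]]; last exact: lin_f0.
  by exists 0; split; [apply/span_seq_nil | rewrite lin_f0].
rewrite span_seq_cons; split.
  case=> a [w [/IH [p [hp ->]] ->]]; exists (a *: y + p); rewrite f_lin; split=> //.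
  by apply/span_seq_cons; exists a, p.
case=> p [/span_seq_cons [a [w [hw ->]]] ->]; exists a, (f w); rewrite f_lin.
by split=> //; apply/IH; exists w.
Qed.

Lemma lin_indep_map t : lin_indep t -> lin_indep (map f t).
Proof.
elim: t => [|y t IH] /=; first by move=> _; exact: lin_indep_nil.
case/lin_indep_cons=> ht nty; apply/lin_indep_cons; split; first exact: IH.
by case/span_seq_map=> p [hp /f_inj ey]; apply: nty; rewrite ey.
Qed.

Lemma img_dim P d : has_dim P d -> has_dim (img f P) d.
Proof.
case=> t [ht <- hPt]; exists (map f t); rewrite size_map; split.
- exact: lin_indep_map.
- by [].
- by move=> v; rewrite span_seq_map; split=> -[p [/hPt hp ->]]; exists p.
Qed.
End LinearImage.

Lemma spanK_subspace (X : V -> Prop) : subspace (spanK X).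
Proof.
split; first by exists [::]; split=> //; apply/span_seq_nil.
move=> a u v [s1 [h1 hu]] [s2 [h2 hv]]; exists (s1 ++ s2); split.
  by move=> x; rewrite mem_cat => /orP[/h1|/h2].
by apply: span_seq_cat hv; apply: subspaceZ (span_seq_subspace _) hu.
Qed.

Lemma spanK_mem (X : V -> Prop) x : X x -> spanK X x.
Proof.
move=> Xx; exists [:: x]; split; first by move=> y; rewrite inE => /eqP ->.
by apply: span_seq_mem; rewrite inE eqxx.
Qed.

Lemma spanK_min (X : V -> Prop) P : subspace P -> (forall x, X x -> P x) ->
  forall v, spanK X v -> P v.
Proof. by move=> hP hXP v [s [hs hv]]; apply: (span_seq_min hP) hv => y /hs /hXP. Qed.

End LinearAlgebra.

Arguments lin_indep_nil {K V}.
Arguments has_dim0 {K V}.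

Section DivisionRing.
Variables (K : fieldType) (L : algType K).
Hypothesis hdiv : forall x : L, x != 0 -> exists y : L, x * y = 1 /\ y * x = 1.
Implicit Types (A B S H : L -> Prop) (x y z : L).

Lemma lunit_neq0 y z : z * y = 1 -> z != 0.
Proof. by apply: contra_eqN => /eqP ->; rewrite mul0r eq_sym oner_eq0. Qed.

(* Translates A y and y B; multiplication by a nonzero element is an
   injective linear map, so translates keep the dimension. *)
Definition rmul A y : L -> Prop := img (fun a => a * y) A.
Definition lmul y B : L -> Prop := img (fun b => y * b) B.

Lemma rmul_subspace A y : subspace A -> subspace (rmul A y).
Proof. by apply: img_subspace => a u v; rewrite mulrDl scalerAl. Qed.

Lemma lmul_subspace B y : subspace B -> subspace (lmul y B).
Proof. by apply: img_subspace => a u v; rewrite mulrDr scalerAr. Qed.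

Lemma rmul_dim A d y : y != 0 -> has_dim A d -> has_dim (rmul A y) d.
Proof.
move=> /hdiv [z [yz _]]; apply: img_dim => [a u v|a b /= e].
  by rewrite mulrDl scalerAl.
by rewrite -(mulr1 a) -(mulr1 b) -yz !mulrA e.
Qed.

Lemma lmul_dim B d y : y != 0 -> has_dim B d -> has_dim (lmul y B) d.
Proof.
move=> /hdiv [z [_ zy]]; apply: img_dim => [a u v|a b /= e].
  by rewrite mulrDr scalerAr.
by rewrite -(mul1r a) -(mul1r b) -zy -!mulrA e.
Qed.

Definition rstab S : L -> Prop := fun h => forall s, S s -> S (s * h).
Definition lstab S : L -> Prop := fun h => forall s, S s -> S (h * s).

Lemma rstab_act S x : prodset S (rstab S) x <-> S x.
Proof.
split=> [[s [h [Ss Hh ->]]]|Sx]; first exact: Hh.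
by exists x, 1; rewrite mulr1; split=> // s Ss; rewrite mulr1.
Qed.

Lemma rstab_subspace S : subspace S -> subspace (rstab S).
Proof.
move=> sS; split=> [s Ss|a h h' Hh Hh' s Ss]; first by rewrite mulr0; exact: subspace0.
by rewrite mulrDr -scalerAr; case: sS => _; apply; [exact: Hh | exact: Hh'].
Qed.

(* The right stabiliser of a finite-dimensional S is a skew subfield:
   inverses exist because S h ⊆ S with dim S h = dim S forces S h = S. *)
Lemma rstab_subfield S d : has_dim S d -> skew_subfield_over_K (rstab S).
Proof.
move=> hS; have sS := has_dim_subspace hS; split.
- by move=> k s Ss; rewrite -scalerAr mulr1; apply: subspaceZ.
- by move=> h h' Hh Hh'; apply: subspaceB (rstab_subspace sS) Hh Hh'.
- by move=> h h' Hh Hh' s Ss; rewrite mulrA; apply/Hh'/Hh.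
move=> h Hh /[dup] nzh /hdiv [z [hz zh]]; exists z; split=> // s Ss.
have Sh_S : forall v, rmul S h v -> S v by move=> v [p [Sp ->]]; apply: Hh.
have [s' [Ss' ->]] := has_dim_eq_sub (rmul_dim nzh hS) hS Sh_S Ss.
by rewrite -mulrA hz mulr1.
Qed.

(* If S is nonzero, h |-> s0 h embeds rstab S into S for any nonzero s0 in S,
   so the stabiliser is finite-dimensional. *)
Lemma rstab_dim S d : has_dim S d -> (0 < d)%N -> exists dH, has_dim (rstab S) dH.
Proof.
move=> hS /(has_dim_nz hS) [s0 [Ss0 /hdiv [z [_ zs0]]]].
have sH := rstab_subspace (has_dim_subspace hS).
apply: (sub_has_dim sH (lmul_dim (lunit_neq0 zs0) hS)) => h Hh.
by exists (s0 * h); split; [exact: Hh | rewrite mulrA zs0 mul1r].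
Qed.

Definition Kline : L -> Prop := fun x => exists k : K, x = k%:A.

Lemma Kline_subfield : skew_subfield_over_K Kline.
Proof.
split.
- by move=> k; exists k.
- by move=> x y [k ->] [l ->]; exists (k - l); rewrite scalerBl.
- by move=> x y [k ->] [l ->]; exists (k * l); rewrite -scalerAl mul1r scalerA.
move=> x [k ->] nz; have kz : k != 0 by apply: contraNneq nz => ->; rewrite scale0r.
exists (k^-1)%:A; split; first by exists k^-1.
  by rewrite -scalerAl mul1r scalerA divff // scale1r.
by rewrite -scalerAl mul1r scalerA mulVf // scale1r.
Qed.

Lemma Kline_dim : has_dim Kline 1.
Proof.
exists [:: 1]; split=> //.
  apply/lin_indep_cons; split; first exact: lin_indep_nil.
  by move/span_seq_nil/eqP; rewrite oner_eq0.
move=> x; rewrite span_seq_cons; split=> [[k ->]|[a [w [/span_seq_nil -> ->]]]].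
  by exists k, 0; rewrite addr0; split=> //; apply/span_seq_nil.
by exists a; rewrite addr0.
Qed.

Lemma Kline_act S x : subspace S -> prodset Kline S x <-> S x.
Proof.
move=> hS; split=> [[h [s [[k ->] Ss ->]]]|Sx].
  by rewrite -scalerAl mul1r; apply: subspaceZ.
by exists 1, x; rewrite mul1r; split=> //; exists 1; rewrite scale1r.
Qed.

Definition kneser_witness A B (dA dB : nat) : Prop :=
  exists (S H : L -> Prop) (dS dH : nat),
    [/\ subspace S /\ (forall x, S x -> spanK (prodset A B) x),
        has_dim S dS,
        skew_subfield_over_K H /\ has_dim H dH,
        (dA + dB <= dS + dH)%N
      & (forall x, prodset H S x <-> S x) \/ (forall x, prodset S H x <-> S x)].

Lemma kneser_witness_mono A B A' B' dA dB dA' dB' :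
  kneser_witness A' B' dA' dB' ->
  (forall x, prodset A' B' x -> spanK (prodset A B) x) ->
  (dA + dB <= dA' + dB')%N -> kneser_witness A B dA dB.
Proof.
move=> [S [H [dS [dH [[sS hS] h1 h2 h3 h4]]]]] hAB le.
exists S, H, dS, dH; split=> //; last exact: leq_trans le h3.
by split=> // x /hS; apply: (spanK_min (spanK_subspace (prodset A B)) hAB).
Qed.

Lemma span_seq_prod (sA sB : seq L) a b : span_seq sA a -> span_seq sB b ->
  span_seq [seq x * y | x <- sA, y <- sB] (a * b).
Proof.
set T := [seq _ | x <- sA, y <- sB]; have sT := span_seq_subspace T.
have left_sub b' : subspace (fun a' => span_seq T (a' * b')).
  split=> [|k u v hu hv]; first by rewrite mul0r; exact: subspace0 sT.
  by rewrite mulrDl -scalerAl; case: sT => _; apply.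
have right_sub a' : subspace (fun b' => span_seq T (a' * b')).
  split=> [|k u v hu hv]; first by rewrite mulr0; exact: subspace0 sT.
  by rewrite mulrDr -scalerAr; case: sT => _; apply.
move=> ha hb; apply: (span_seq_min (left_sub b)) ha => x hx.
apply: (span_seq_min (right_sub x)) hb => y hy.
by apply: span_seq_mem; apply: allpairs_f.
Qed.

Lemma spanK_prod_dim A B dA dB : has_dim A dA -> has_dim B dB ->
  exists dC, has_dim (spanK (prodset A B)) dC.
Proof.
move=> [sA [_ _ hA]] [sB [_ _ hB]].
apply: (span_has_dim (s := [seq x * y | x <- sA, y <- sB]) (spanK_subspace _)).
apply: spanK_min (span_seq_subspace _) _.
by move=> x [a [b [/hA Aa /hB Bb ->]]]; apply: span_seq_prod.
Qed.

(* A translate of A and one of B lie in <AB>, which bounds dim A, dim B. *)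
Lemma dims_le_spanK_prod A B C dA dB dC : has_dim A dA -> has_dim B dB ->
  has_dim C dC -> (0 < dA)%N -> (0 < dB)%N ->
  (forall x, spanK (prodset A B) x -> C x) -> (dA <= dC)%N /\ (dB <= dC)%N.
Proof.
move=> hA hB hC /(has_dim_nz hA) [a0 [Aa0 nza]] /(has_dim_nz hB) [b0 [Bb0 nzb]] hAB.
split.
  apply: has_dim_le (rmul_dim nzb hA) hC _ => x [a [Aa ->]].
  by apply/hAB/spanK_mem; exists a, b0.
apply: has_dim_le (lmul_dim nza hB) hC _ => x [b [Bb ->]].
by apply/hAB/spanK_mem; exists a0, b.
Qed.

Definition meets (P Q : L -> Prop) : Prop := exists x, [/\ x != 0, P x & Q x].

(* A pair is rigid when every y with A ∩ Ay ≠ 0 and B ∩ yB ≠ 0 satisfies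
   Ay ⊆ A and yB ⊆ B, i.e. no e-transform can change (A, B). *)
Definition rigid A B : Prop := forall y, y != 0 ->
  meets A (rmul A y) -> meets B (lmul y B) -> rstab A y /\ lstab B y.

Lemma etransform_prod A B y z x : z * y = 1 ->
  prodset (addsp A (rmul A y)) (lmul z (capsp B (lmul y B))) x ->
  spanK (prodset A B) x.
Proof.
move=> zy [_ [_ [[a1 [_ [Aa1 [a2 [Aa2 ->]] ->]]] [b [[Bb [b' [Bb' eb]]] ->]] ->]]].
have zb : z * b = b' by rewrite eb mulrA zy mul1r.
rewrite mulrDl -mulrA (mulrA y) -[y * z * b]mulrA zb -eb.
apply: subspaceD (spanK_subspace _) _ _; apply: spanK_mem.
  by exists a1, (z * b); rewrite zb.
by exists a2, b.
Qed.

(* Rigid case, first alternative: if B b0^-1 stabilises A on the right, then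
   S = A b0 and its right stabiliser H (which contains b0^-1 B) work. *)
Lemma stabilised_witness A B dA dB b0 z : has_dim A dA -> has_dim B dB ->
  (0 < dA)%N -> B b0 -> b0 * z = 1 -> z * b0 = 1 ->
  (forall b, B b -> rstab A (b * z)) -> kneser_witness A B dA dB.
Proof.
move=> hA hB pA Bb0 b0z zb0 hBA.
have hS := rmul_dim (lunit_neq0 b0z) hA.
have [dH hH] := rstab_dim hS pA.
exists (rmul A b0), (rstab (rmul A b0)), dA, dH; split.
- split; first exact: has_dim_subspace hS.
  by move=> x [a [Aa ->]]; apply: spanK_mem; exists a, b0.
- exact: hS.
- by split; [exact: rstab_subfield hS | exact: hH].
- rewrite leq_add2l.
  have zB_H : forall v, lmul z B v -> rstab (rmul A b0) v.
    move=> _ [b [Bb ->]] _ [a [Aa ->]].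
    exists (a * (b * z)); split; first exact: hBA.
    by rewrite -!mulrA (mulrA b0) b0z mul1r zb0 mulr1.
  exact: has_dim_le (lmul_dim (lunit_neq0 zb0) hB) hH zB_H.
- by right; apply: rstab_act.
Qed.

(* Rigid case, second alternative: if A b0 ∩ A b1 = 0 then S = A b0 + A b1
   has dimension 2 dim A, which suffices with H = K when dim B <= dim A. *)
Lemma direct_sum_witness A B dA dB b0 b1 : has_dim A dA -> (dB <= dA)%N ->
  B b0 -> B b1 -> b0 != 0 -> b1 != 0 ->
  (forall x, capsp (rmul A b0) (rmul A b1) x -> x = 0) ->
  kneser_witness A B dA dB.
Proof.
move=> hA le Bb0 Bb1 nz0 nz1 disj.
have [dS [dc [hS hc g]]] := grassmann (rmul_dim nz0 hA) (rmul_dim nz1 hA).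
have dc0 : (dc <= 0)%N by apply: (has_dim_le hc has_dim0) => x /disj.
exists (addsp (rmul A b0) (rmul A b1)), Kline, dS, 1%N; split.
- split; first exact: has_dim_subspace hS.
  move=> _ [_ [_ [[a [Aa ->]] [a' [Aa' ->]] ->]]].
  by apply: subspaceD (spanK_subspace _) _ _; apply: spanK_mem; [exists a, b0 | exists a', b1].
- exact: hS.
- exact: (conj Kline_subfield Kline_dim).
- lia.
- by left=> x; apply: Kline_act; exact: has_dim_subspace hS.
Qed.

(* In a rigid pair, if b1 b0^-1 does not stabilise A then A b0 ∩ A b1 = 0:
   a common nonzero vector a b0 = a' b1 would make y = b1 b0^-1 satisfy
   a = a' y and b1 = y b0, so rigidity would force A y ⊆ A. *)
Lemma rigid_disjoint A B b0 b1 z : rigid A B -> B b0 -> B b1 ->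
  b0 * z = 1 -> z * b0 = 1 -> ~ rstab A (b1 * z) ->
  forall x, capsp (rmul A b0) (rmul A b1) x -> x = 0.
Proof.
move=> rig Bb0 Bb1 b0z zb0 nstab x [[a [Aa ex]] [a' [Aa' ex']]].
apply: NNPP => nzx; apply: nstab; set y := b1 * z.
have ea : a = a' * y by rewrite /y mulrA -ex' ex -mulrA b0z mulr1.
have eb1 : b1 = y * b0 by rewrite /y -mulrA zb0 mulr1.
have nza : a != 0 by apply/eqP => a0; apply: nzx; rewrite ex a0 mul0r.
have nzb1 : b1 != 0 by apply/eqP => b10; apply: nzx; rewrite ex' b10 mulr0.
have nzy : y != 0 by apply: contra_neq nzb1 => y0; rewrite eb1 y0 mul0r.
apply: (rig y nzy _ _).1.
  by exists a; split=> //; exists a'.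
by exists b1; split=> //; exists b0.
Qed.

Lemma rigid_witness_le A B dA dB : rigid A B -> has_dim A dA -> has_dim B dB ->
  (0 < dA)%N -> (0 < dB)%N -> (dB <= dA)%N -> kneser_witness A B dA dB.
Proof.
move=> rig hA hB pA pB le.
have [b0 [Bb0 /[dup] nz0 /hdiv [z [b0z zb0]]]] := has_dim_nz hB pB.
case: (classic (forall b, B b -> rstab A (b * z))) => [stab|].
  exact: stabilised_witness hA hB pA Bb0 b0z zb0 stab.
move=> /not_all_ex_not [b1 hb1].
have [Bb1 nstab] := (not_imply_elim _ _ hb1, not_imply_elim2 _ _ hb1).
have nzb1 : b1 != 0.
  apply/eqP => b10; apply: nstab => a Aa; rewrite b10 mul0r mulr0.
  exact: subspace0 (has_dim_subspace hA).
exact: direct_sum_witness hA le Bb0 Bb1 nz0 nzb1 (rigid_disjoint rig Bb0 Bb1 b0z zb0 nstab).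
Qed.

End DivisionRing.

(* The opposite ring L^c (same K-space, product x * y := y * x) is again a
   K-algebra.  Passing to it exchanges left and right, which gives the
   mirror images of the one-sided arguments for free. *)
HB.instance Definition _ (K : fieldType) (L : algType K) := GRing.Lmodule.on L^c.
HB.instance Definition _ (K : fieldType) (L : algType K) :=
  GRing.Lmodule_isLalgebra.Build K L^c (fun a x y => @scalerAr K L a y x).
HB.instance Definition _ (K : fieldType) (L : algType K) :=
  GRing.Lalgebra_isAlgebra.Build K L^c (fun a x y => @scalerAl K L a y x).

Section Opposite.
Variables (K : fieldType) (L : algType K).
Implicit Types (A B H : L -> Prop).

Lemma division_opp :
  (forall x : L, x != 0 -> exists y : L, x * y = 1 /\ y * x = 1) ->
  forall x : L^c, x != 0 -> exists y : L^c, x * y = 1 /\ y * x = 1.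
Proof. by move=> hdiv x /hdiv [y [xy yx]]; exists y. Qed.

Lemma prodset_opp A B x : @prodset K L^c A B x <-> prodset B A x.
Proof. by split=> -[u [v [Au Bv ->]]]; exists v, u. Qed.

Lemma spanK_prodset_opp A B x :
  spanK (@prodset K L^c A B) x <-> spanK (prodset B A) x.
Proof.
by split=> -[s [hs hx]]; exists s; split=> // y /hs /prodset_opp.
Qed.

Lemma subfield_opp H : @skew_subfield_over_K K L^c H -> skew_subfield_over_K H.
Proof.
case=> hK hB hM hV; split=> // [x y Hx Hy|x Hx /(hV x Hx) [y [Hy xy yx]]].
  exact: hM y x Hy Hx.
by exists y.
Qed.

Lemma kneser_witness_opp A B dA dB :
  @kneser_witness K L^c B A dB dA -> kneser_witness A B dA dB.
Proof.
move=> [S [H [dS [dH [[sS hS] hSd [hH hHd] le hact]]]]].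
exists S, H, dS, dH; split=> //.
- by split=> // x /hS /spanK_prodset_opp.
- by split=> //; apply: subfield_opp.
- by rewrite addnC.
- by case: hact => hact; [right | left] => x; rewrite -hact prodset_opp.
Qed.

Lemma rigid_opp A B : rigid A B -> @rigid K L^c B A.
Proof. by move=> rig y nzy mB mA; have [rA lB] := rig y nzy mA mB. Qed.

End Opposite.

Section KneserInduction.
Variables (K : fieldType) (L : algType K).
Hypothesis hdiv : forall x : L, x != 0 -> exists y : L, x * y = 1 /\ y * x = 1.
Implicit Types (A B C : L -> Prop).

(* Every rigid pair satisfies the theorem: when dim A < dim B, apply the case
   dim B <= dim A to the pair (B, A) in the opposite ring. *)
Lemma rigid_witness A B dA dB : rigid A B -> has_dim A dA -> has_dim B dB ->
  (0 < dA)%N -> (0 < dB)%N -> kneser_witness A B dA dB.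
Proof.
move=> rig hA hB pA pB; case: (leqP dB dA) => [le|/ltnW le].
  exact: rigid_witness_le.
apply: kneser_witness_opp.
exact: (rigid_witness_le (division_opp hdiv) (rigid_opp rig) hB hA pB pA le).
Qed.

(* (A', B') is a legitimate replacement for (A, B) in the induction: both
   nonzero, A'B' ⊆ <AB>, and (dim A + dim B, - dim B) strictly increases. *)
Definition improves A B dA dB A' B' dA' dB' : Prop :=
  [/\ (0 < dA')%N, (0 < dB')%N,
      (forall x, prodset A' B' x -> spanK (prodset A B) x)
    & (dA + dB < dA' + dB')%N \/ (dA + dB = dA' + dB' /\ (dB' < dB)%N)].

(* For y with A ∩ Ay ≠ 0 and B ∩ yB ≠ 0 not
   stabilising (A, B), the Grassmann inequalities for (A, Ay) and (B, yB) show
   that (A + Ay, y^-1 (B ∩ yB)) or its mirror image ((A ∩ Ay) y^-1, B + yB)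
   has a larger total dimension, or the same total and a smaller second
   factor; otherwise A + Ay = A and B ∩ yB = B, i.e. y stabilises (A, B). *)
Lemma etransform A B dA dB y : has_dim A dA -> has_dim B dB -> y != 0 ->
  meets A (rmul A y) -> meets B (lmul y B) -> ~ (rstab A y /\ lstab B y) ->
  exists A' B' dA' dB',
    [/\ has_dim A' dA', has_dim B' dB' & improves A B dA dB A' B' dA' dB'].
Proof.
move=> hA hB nzy [xa [nzxa Axa Ayxa]] [xb [nzxb Bxb yBxb]] nstab.
have [z [yz zy]] := hdiv nzy; have nzz := lunit_neq0 zy.
have sA := has_dim_subspace hA; have sB := has_dim_subspace hB.
have [dSA [dIA [hSA hIA gA]]] := grassmann hA (rmul_dim hdiv nzy hA).
have [dSB [dIB [hSB hIB gB]]] := grassmann hB (lmul_dim hdiv nzy hB).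
have pIA : (0 < dIA)%N := has_dim_pos hIA (conj Axa Ayxa) nzxa.
have pIB : (0 < dIB)%N := has_dim_pos hIB (conj Bxb yBxb) nzxb.
have leSA : (dA <= dSA)%N := has_dim_le hA hSA (addsp_l (rmul_subspace y sA)).
have leSB : (dB <= dSB)%N := has_dim_le hB hSB (addsp_l (lmul_subspace y sB)).
have leIA : (dIA <= dA)%N := has_dim_le hIA hA (fun v h => h.1).
have leIB : (dIB <= dB)%N := has_dim_le hIB hB (fun v h => h.1).
have right_tr : (dA + dB < dSA + dIB)%N \/ (dA + dB = dSA + dIB /\ (dIB < dB)%N) ->
    exists A' B' dA' dB',
    [/\ has_dim A' dA', has_dim B' dB' & improves A B dA dB A' B' dA' dB'].
  move=> better; exists (addsp A (rmul A y)), (lmul z (capsp B (lmul y B))), dSA, dIB.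
  split=> //; first exact (lmul_dim hdiv nzz hIB).
  split=> // [|x]; [lia | exact: etransform_prod zy].
case: (ltnP (dA + dB) (dSA + dIB)) => c1; first by apply: right_tr; left.
case: (ltnP (dA + dB) (dIA + dSB)) => c2.
  exists (rmul (capsp A (rmul A y)) z), (addsp B (lmul y B)), dIA, dSB.
  split=> //; first exact (rmul_dim hdiv nzz hIA).
  split=> //; [lia | | by left].
  by move=> x /prodset_opp /(etransform_prod (L := L^c) yz) /spanK_prodset_opp.
case: (ltnP dIB dB) => c3; first by apply: right_tr; right; split=> //; lia.
exfalso; apply: nstab; split.
  have hSA' : has_dim (addsp A (rmul A y)) dA by have -> : dA = dSA by lia.
  by move=> a Aa; apply: (addsp_dim_eq hA hSA' (rmul_subspace y sA)); exists a.
have hIB' : has_dim (capsp B (lmul y B)) dB by have -> : dB = dIB by lia.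
have B_yB : forall b, B b -> lmul y B b := capsp_dim_eq hB hIB'.
by move=> b Bb; apply: (has_dim_eq_sub hB (lmul_dim hdiv nzy hB) B_yB); exists b.
Qed.

Lemma not_rigid A B : ~ rigid A B -> exists y,
  [/\ y != 0, meets A (rmul A y), meets B (lmul y B) & ~ (rstab A y /\ lstab B y)].
Proof.
move=> nrig; apply: NNPP => none; apply: nrig => y nzy mA mB.
by apply: NNPP => nst; apply: none; exists y.
Qed.

(* The theorem for all nonzero A, B with <AB> inside a fixed
   finite-dimensional C, by lexicographic induction on
   (2 dim C - dim A - dim B, dim B): rigid pairs are handled directly, other
   pairs are replaced by an e-transform, which decreases the measure. *)
Lemma kneser_ind C dC A B dA dB : has_dim C dC ->
  has_dim A dA -> has_dim B dB -> (0 < dA)%N -> (0 < dB)%N ->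
  (forall x, spanK (prodset A B) x -> C x) -> kneser_witness A B dA dB.
Proof.
move=> hC; move ek: (dC + dC - (dA + dB))%N => k.
elim/ltn_ind: k dB B dA A ek => k IHk dB; elim/ltn_ind: dB => dB IHb B dA A ek.
move=> hA hB pA pB hAB; case: (classic (rigid A B)) => [rig|/not_rigid].
  exact: rigid_witness.
case=> y [nzy mA mB nstab].
have [A' [B' [dA' [dB' [hA' hB' [pA' pB' hA'B' better]]]]]] :=
  etransform hA hB nzy mA mB nstab.
have hA'B'C : forall x, spanK (prodset A' B') x -> C x.
  by apply: (spanK_min (has_dim_subspace hC)) => v /hA'B' /hAB.
have [bA' bB'] := dims_le_spanK_prod hdiv hA' hB' hC pA' pB' hA'B'C.
have le : (dA + dB <= dA' + dB')%N by case: better => [|[]]; lia.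
apply: (kneser_witness_mono _ hA'B' le); case: better => [lt|[eq lt]].
  by apply: (IHk (dC + dC - (dA' + dB'))%N) => //; lia.
by apply: (IHb dB') => //; lia.
Qed.

End KneserInduction.

Unset Implicit Arguments.

(* L : algType K encodes that K (via k |-> k%:A) lies in the center of L;
   the hypothesis hdiv makes L a division ring. *)
Theorem mainTheorem6 (K : fieldType) (L : algType K)
  (hdiv : forall x : L, x != 0 -> exists y : L, x * y = 1 /\ y * x = 1)
  (A B : L -> Prop) (dA dB : nat) :
  has_dim A dA -> has_dim B dB -> (0 < dA)%N -> (0 < dB)%N ->
  exists (S H : L -> Prop) (dS dH : nat),
    [/\ subspace S /\ (forall x, S x -> spanK (prodset A B) x),
        has_dim S dS,
        skew_subfield_over_K H /\ has_dim H dH,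
        (dA + dB <= dS + dH)%N
      & (forall x, prodset H S x <-> S x) \/ (forall x, prodset S H x <-> S x)].
Proof.
move=> hA hB pA pB.
have [dC hC] := spanK_prod_dim hA hB.
exact: (kneser_ind hdiv hC hA hB pA pB (fun x h => h)).
Qed.
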